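(* For every integer $g\geq 3$ there exists a fragile graph that is cubic ($3$-regular) and has girth $g$; in particular, for every $g$ there is a fragile graph of girth $g$ that is not $2$-degenerate.
   Context: All graphs are finite and simple. A graph is $k$-connected if it has at least $k+1$ vertices and no vertex cutset with at most $k-1$ vertices. A graph is fragile if it has no $3$-connected subgraph. A graph is $2$-degenerate if every non-null subgraph has a vertex of degree at most $2$. *)

From mathcomp Require Import all_boot.
Set Implicit Arguments. Unset Strict Implicit. Unset Printing Implicit Defensive.

Section Graphs.
Variable V : finType.

Definition simple_graph (e : rel V) : Prop := symmetric e /\ irreflexive e.

Definition is_subgraph (e : rel V) (S : {set V}) (f : rel V) : Prop :=
  symmetric f /\ forall x y, f x y -> [&& x \in S, y \in S & e x y].

Definition restr (A : {set V}) (f : rel V) : rel V :=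
  [rel a b | [&& a \in A, b \in A & f a b]].

Definition connected_on (A : {set V}) (f : rel V) : Prop :=
  forall x y, x \in A -> y \in A -> connect (restr A f) x y.

Definition k_connected (k : nat) (S : {set V}) (f : rel V) : Prop :=
  k.+1 <= #|S| /\
  forall X : {set V}, X \subset S -> #|X| <= k.-1 -> connected_on (S :\: X) f.

Definition fragile (e : rel V) : Prop :=
  forall (S : {set V}) (f : rel V), is_subgraph e S f -> ~ k_connected 3 S f.

Definition deg_in (S : {set V}) (f : rel V) (x : V) : nat :=
  #|[set y in S | f x y]|.

Definition two_degenerate (e : rel V) : Prop :=
  forall (S : {set V}) (f : rel V), is_subgraph e S f -> S != set0 ->
    exists2 x, x \in S & deg_in S f x <= 2.

Definition cubic (e : rel V) : Prop := forall x : V, #|[set y | e x y]| = 3.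

Definition has_cycle_of_length (e : rel V) (n : nat) : Prop :=
  exists s : seq V, [/\ size s = n, 3 <= n, uniq s & cycle e s].

Definition girth_eq (e : rel V) (g : nat) : Prop :=
  has_cycle_of_length e g /\ forall n, n < g -> ~ has_cycle_of_length e n.

End Graphs.

From mathcomp Require Import all_boot zify.
Set Implicit Arguments. Unset Strict Implicit. Unset Printing Implicit Defensive.

(* The graph is the Hamiltonian cycle 0, 1, ..., 2m-1 plus a perfect matching whose
   edges stay inside the halves {0, ..., m-1} and {m, ..., 2m-1}.  It is cubic, and it
   is fragile: a 3-connected subgraph of a cubic graph contains every neighbour of each
   of its vertices, hence it is the whole graph, yet deleting m-1 and 2m-1 separates
   the two halves.
   The matching comes from a switching argument in the style of Erdos and Sachs.
   Start from the single chord {0, g-1}, which closes the g-cycle 0, 1, ..., g-1, and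
   keep all cycles of length at least g.  While a vertex x is unmatched, parity (m is
   even) yields a second unmatched vertex y in its half, and counting (balls of radius
   g-1 have at most 4^(g-1) vertices) yields a vertex u of that half at distance at
   least g from x and y.  If u is unmatched, match x with u; otherwise replace the edge
   u s(u) by x u and y s(u).  Neither step creates a cycle shorter than g. *)

Section Walks.
Variable T : eqType.
Implicit Types (e : rel T) (a b u v x y : T) (p : seq T).

Definition dist_geq e a b k := forall p, path e a p -> last a p = b -> k <= size p.

Definition girth_geq e g := forall c, cycle e c -> uniq c -> 3 <= size c -> g <= size c.

Definition edge2 x y : rel T :=
  [rel a b | ((a == x) && (b == y)) || ((a == y) && (b == x))].
Definition add_edge e x y : rel T := [rel a b | e a b || edge2 x y a b].
Definition del_edge e x y : rel T := [rel a b | e a b && ~~ edge2 x y a b].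

Lemma edge2C x y a b : edge2 x y a b = edge2 x y b a.
Proof. by rewrite /edge2 /= orbC; congr (_ || _); rewrite andbC. Qed.

Lemma edge2_head x y a b c d : edge2 x y a b -> edge2 x y c d -> (b == c) || (b == d).
Proof.
by move=> /orP[/andP[/eqP? /eqP?]|/andP[/eqP? /eqP?]]
   /orP[/andP[/eqP? /eqP?]|/andP[/eqP? /eqP?]]; subst; rewrite eqxx ?orbT.
Qed.

Lemma edge2_inj x y a b c d : edge2 x y a b -> edge2 x y c d -> b = d -> a = c.
Proof.
by move=> /orP[/andP[/eqP? /eqP?]|/andP[/eqP? /eqP?]]
   /orP[/andP[/eqP? /eqP?]|/andP[/eqP? /eqP?]] ?; subst.
Qed.

Lemma add_edge_sym e x y : symmetric e -> symmetric (add_edge e x y).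
Proof. by move=> e_sym a b; rewrite /add_edge /= e_sym edge2C. Qed.

Lemma del_edge_sym e x y : symmetric e -> symmetric (del_edge e x y).
Proof. by move=> e_sym a b; rewrite /del_edge /= e_sym edge2C. Qed.

Lemma del_edge_sub e x y : subrel (del_edge e x y) e.
Proof. by move=> a b /andP[]. Qed.

Lemma add_edgeS e1 e2 x y : subrel e1 e2 -> subrel (add_edge e1 x y) (add_edge e2 x y).
Proof. by move=> sub12 a b /orP[/sub12|]; rewrite /add_edge /= => ->; rewrite ?orbT. Qed.

Lemma girth_geq_sub e1 e2 g : subrel e2 e1 -> girth_geq e1 g -> girth_geq e2 g.
Proof. by move=> sub21 ge1 c /(sub_cycle sub21); apply: ge1. Qed.

Lemma dist_geq_sub e1 e2 a b k : subrel e2 e1 -> dist_geq e1 a b k -> dist_geq e2 a b k.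
Proof. by move=> sub21 d1 p ap; apply: d1; apply: sub_path ap. Qed.

Lemma dist_geq_leq e a b k1 k2 : k1 <= k2 -> dist_geq e a b k2 -> dist_geq e a b k1.
Proof. by move=> le12 d p ap /(d p ap); apply: leq_trans. Qed.

Lemma dist_geq_neq e a b k : 0 < k -> dist_geq e a b k -> a != b.
Proof. by move=> k_gt0 d; apply/eqP => ab; move: (d [::] erefl ab); rewrite leqNgt k_gt0. Qed.

Lemma dist_geq_nonadj e a b k : 1 < k -> dist_geq e a b k -> ~~ e a b.
Proof.
by move=> k_gt1 d; apply/negP => ab; have /= := d [:: b]; rewrite ab => /(_ erefl erefl); lia.
Qed.

Lemma dist_geq_adj e a u v k : e v u -> dist_geq e a u k.+1 -> dist_geq e a v k.
Proof.
move=> vu d p ap pv; have := d (rcons p u).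
by rewrite rcons_path ap pv vu last_rcons size_rcons => /(_ erefl erefl).
Qed.

Lemma dist_geq_unreachable e a b k : a != b -> (forall c, ~~ e c b) -> dist_geq e a b k.
Proof.
move=> ab no_in; elim/last_ind => [_ /eqP|p c _]; first by rewrite (negbTE ab).
by rewrite rcons_path last_rcons => /andP[_ cb] ec; rewrite ec (negbTE (no_in _)) in cb.
Qed.

Lemma dist_geq_potential e (phi : T -> nat) a b :
  (forall c d, e c d -> phi d <= (phi c).+1) -> dist_geq e a b (phi b - phi a).
Proof.
move=> phi_lip p; elim: p a => [|c p IHp] a /=; first by move=> _ ->; rewrite subnn.
by move=> /andP[ac cp] pb; have := IHp c cp pb; have := phi_lip _ _ ac; lia.
Qed.

Lemma path_rev_walk e a p : symmetric e -> path e a p ->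
  exists q, [/\ path e (last a p) q, last (last a p) q = a & size q = size p].
Proof.
move=> e_sym; elim/last_ind: p => [|p c IHp]; first by exists [::].
rewrite rcons_path last_rcons => /andP[ap pc].
have [q [lq qa sq]] := IHp ap.
by exists (last a p :: q); rewrite /= lq qa sq size_rcons e_sym pc.
Qed.

Lemma dist_geqC e a b k : symmetric e -> dist_geq e a b k -> dist_geq e b a k.
Proof.
move=> e_sym d p bp pa; have [q [bq qb <-]] := path_rev_walk e_sym bp.
by rewrite pa in bq qb; apply: d.
Qed.

Lemma dist_geq_edge2 e x y a b k :
  dist_geq e x y k -> dist_geq e y x k -> edge2 x y a b -> dist_geq e a b k.
Proof. by move=> dxy dyx /orP[/andP[/eqP-> /eqP->]|/andP[/eqP-> /eqP->]]. Qed.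

Lemma uniq_last_eq_nil u p : uniq (u :: p) -> last u p = u -> p = [::].
Proof.
case: p => [//|c p] /= /andP[u_notin _] pu.
by move: (mem_last c p); rewrite pu (negbTE u_notin).
Qed.

Lemma path_relU_split_last e (N : rel T) u p :
  path [rel a b | e a b || N a b] u p -> ~~ path e u p ->
  exists p1 b p2, [/\ p = p1 ++ b :: p2, N (last u p1) b & path e b p2].
Proof.
elim: p u => [//|c p IHp] u /= /andP[uc cp].
case cp_e: (path e c p).
  rewrite andbT => not_uc; exists [::], c, p; split => //.
  by move: uc; rewrite (negbTE not_uc).
by have [p1 [b [p2 [-> Nb bp2]]]] := IHp c cp (negbT cp_e); exists (c :: p1), b, p2.
Qed.

Lemma uniq_path_add_edge_split e x y u p :
  uniq (u :: p) -> path (add_edge e x y) u p -> ~~ path e u p ->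
  exists p1 b p2,
    [/\ p = p1 ++ b :: p2, edge2 x y (last u p1) b, path e u p1 & path e b p2].
Proof.
move=> uniq_p up not_up; have [p1 [b [p2 [def_p new_b bp2]]]] := path_relU_split_last up not_up.
exists p1, b, p2; split=> //.
have b_notin : b \notin u :: p1.
  by move: uniq_p; rewrite def_p -cat_cons cat_uniq /= negb_or => /and3P[_ /andP[]].
move: up; rewrite def_p cat_path => /andP[up1 _].
apply: (sub_in_path (P := mem (u :: p1))) up1; last exact/allP.
move=> c d c_in d_in /orP[//|new_cd].
by case/orP: (edge2_head new_b new_cd) => /eqP b_eq; rewrite b_eq ?c_in ?d_in in b_notin.
Qed.

Lemma girth_geq_add_edge e x y g : symmetric e -> girth_geq e g ->
  dist_geq e x y g.-1 -> girth_geq (add_edge e x y) g.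
Proof.
move=> e_sym ge dxy [//|u p] cycle_p uniq_p size_p.
move: cycle_p; rewrite /= rcons_path => /andP[up closing].
rewrite leqNgt; apply/negP => short; have dyx := dist_geqC e_sym dxy.
have [up_e|not_up] := boolP (path e u p).
  case/orP: closing => [closing|new_closing].
    have := ge (u :: p); rewrite /= rcons_path up_e closing => /(_ erefl uniq_p size_p).
    by rewrite leqNgt short.
  rewrite edge2C in new_closing.
  by have := dist_geq_edge2 dxy dyx new_closing up_e erefl; move: short; rewrite /=; lia.
have [p1 [b [p2 [def_p new_b up1 bp2]]]] := uniq_path_add_edge_split uniq_p up not_up.
have last_p : last u p = last b p2 by rewrite def_p last_cat.
case/orP: closing => [closing|new_closing].
  have walk : path e b (p2 ++ u :: p1) by rewrite cat_path bp2 /= up1 andbT -last_p.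
  rewrite edge2C in new_b.
  have := dist_geq_edge2 dxy dyx new_b walk; rewrite last_cat /= => /(_ erefl).
  by move: short; rewrite /= def_p !size_cat /=; lia.
rewrite edge2C in new_closing.
move: uniq_p; rewrite def_p -cat_cons cat_uniq => /and3P[uniq_p1 b_notin uniq_p2].
have b_last : b = last u p.
  case/orP: (edge2_head new_b new_closing) => /eqP // b_u.
  by rewrite b_u /= mem_head in b_notin.
have p1_nil : p1 = [::] := uniq_last_eq_nil uniq_p1 (edge2_inj new_b new_closing b_last).
have p2_nil : p2 = [::] by apply: uniq_last_eq_nil uniq_p2 _; rewrite -last_p.
by move: size_p; rewrite def_p p1_nil p2_nil.
Qed.

Lemma dist_geq_del_edge e u v g : symmetric e -> irreflexive e -> girth_geq e g -> e u v ->
  dist_geq (del_edge e u v) u v g.-1.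
Proof.
move=> e_sym e_irr ge uv p up; case/shortenP: up => q uq uniq_q q_sub qv.
have size_q : size q <= size p.
  by apply: uniq_leq_size q_sub; move: uniq_q; rewrite cons_uniq => /andP[].
clear q_sub; have uq_e : path e u q := sub_path (@del_edge_sub e u v) uq.
have q_long : 2 <= size q.
  case: q uq qv {uniq_q size_q uq_e} => [|w [|//]] /= uq qv.
  - by move: uv; rewrite -qv e_irr.
  - by move: uq; rewrite qv /del_edge /edge2 /= !eqxx /= andbF.
have := ge (u :: q); rewrite /= rcons_path uq_e qv e_sym uv => /(_ erefl uniq_q q_long).
by move: size_q; lia.
Qed.

Lemma dist_geq_add_edge_del_edge e x u v y g :
  dist_geq e x v g.-1 -> dist_geq e y v g.-1 -> dist_geq (del_edge e u v) u v g.-1 ->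
  dist_geq (add_edge (del_edge e u v) x u) y v g.-1.
Proof.
move=> dxv dyv duv p yp pv.
have [yp_del|not_yp] := boolP (path (del_edge e u v) y p).
  exact: dyv (sub_path (@del_edge_sub e u v) yp_del) pv.
have [p1 [b [p2 [def_p new_b bp2]]]] := path_relU_split_last yp not_yp.
have p2v : last b p2 = v by rewrite -pv def_p last_cat.
have size_p2 : size p2 <= size p by rewrite def_p size_cat /=; lia.
case/orP: new_b => /andP[_ /eqP b_eq]; subst b.
  by have := duv p2 bp2 p2v; lia.
by have := dxv p2 (sub_path (@del_edge_sub e u v) bp2) p2v; lia.
Qed.

Lemma girth_geq_switch e g x y u v : symmetric e -> irreflexive e -> girth_geq e g ->
  e u v -> dist_geq e x u g.-1 -> dist_geq e y v g.-1 -> dist_geq e x v g.-1 ->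
  girth_geq (add_edge (add_edge (del_edge e u v) x u) y v) g.
Proof.
move=> e_sym e_irr ge uv dxu dyv dxv.
have del_sym := del_edge_sym u v e_sym.
have ge_del : girth_geq (del_edge e u v) g := girth_geq_sub (@del_edge_sub e u v) ge.
have ge_xu := girth_geq_add_edge del_sym ge_del (dist_geq_sub (@del_edge_sub e u v) dxu).
apply: girth_geq_add_edge (add_edge_sym x u del_sym) ge_xu _.
exact: dist_geq_add_edge_del_edge dxv dyv (dist_geq_del_edge e_sym e_irr ge uv).
Qed.

End Walks.

Section Involutions.
Variable T : eqType.
Implicit Types (s : T -> T) (a b u v w : T).

Definition pair_up s a b w := if w == a then b else if w == b then a else s w.
Definition unpair s u v w := if w == u then u else if w == v then v else s w.

Lemma pair_up_involutive s a b : involutive s -> s a = a -> s b = b ->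
  involutive (pair_up s a b).
Proof.
move=> s_inv sa sb w; rewrite /pair_up.
have [->|wa] := eqVneq w a; first by rewrite eqxx; case: eqVneq.
have [->|wb] := eqVneq w b; first by rewrite eqxx.
have swa : s w != a by apply: contra wa => /eqP sw; rewrite -(s_inv w) sw sa.
have swb : s w != b by apply: contra wb => /eqP sw; rewrite -(s_inv w) sw sb.
by rewrite (negbTE swa) (negbTE swb) s_inv.
Qed.

Lemma unpair_involutive s u : involutive s -> involutive (unpair s u (s u)).
Proof.
move=> s_inv w; rewrite /unpair.
have [->|wu] := eqVneq w u; first by rewrite eqxx.
have [->|wv] := eqVneq w (s u); first by rewrite eqxx; case: eqVneq.
have swu : s w != u by apply: contra wv => /eqP <-; rewrite s_inv.
have swv : s w != s u by apply: contra wu => /eqP/(can_inj s_inv) ->.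
by rewrite (negbTE swu) (negbTE swv) s_inv.
Qed.

Lemma pair_up_rel (R : rel T) s a b : symmetric R -> R a b -> (forall w, R w (s w)) ->
  forall w, R w (pair_up s a b w).
Proof.
move=> R_sym ab Rs w; rewrite /pair_up.
by have [->|_] := eqVneq w a; [|have [->|_] := eqVneq w b; rewrite // R_sym].
Qed.

Definition switch s x y u := pair_up (pair_up (unpair s u (s u)) x u) y (s u).

Lemma switchE s x y u w : switch s x y u w =
  if w == y then s u else if w == s u then y else
  if w == x then u else if w == u then x else s w.
Proof.
rewrite /switch /pair_up /unpair.
by case: (w == y) => //; case: (eqVneq w (s u)) => // _; case: (w == x) => //; case: (w == u).
Qed.

Lemma switch_rel (R : rel T) s x y u : symmetric R -> R x u -> R y (s u) ->
  (forall w, R w (s w)) -> forall w, R w (switch s x y u w).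
Proof.
move=> R_sym Rxu Ryv Rs w; rewrite switchE.
have [->|_] := eqVneq w y => //; have [->|_] := eqVneq w (s u); first by rewrite R_sym.
by have [->|_] := eqVneq w x => //; have [->|_] := eqVneq w u; rewrite // R_sym.
Qed.

Lemma switch_involutive s x y u : involutive s -> s x = x -> s y = y -> s u != u ->
  y != x -> x != u -> y != u -> x != s u -> y != s u -> involutive (switch s x y u).
Proof.
move=> s_inv sx sy su yx xu yu xsu ysu.
have unpair_x : unpair s u (s u) x = x by rewrite /unpair (negbTE xu) (negbTE xsu) sx.
have unpair_u : unpair s u (s u) u = u by rewrite /unpair eqxx.
apply: pair_up_involutive; first exact: pair_up_involutive (unpair_involutive _ s_inv) _ _.
  by rewrite /pair_up (negbTE yx) (negbTE yu) /unpair (negbTE yu) (negbTE ysu).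
by rewrite /pair_up eq_sym (negbTE xsu) (negbTE su) /unpair (negbTE su) eqxx.
Qed.

End Involutions.

Section FiniteGraphs.
Variable T : finType.

Lemma even_card_involution (A : {set T}) (s : T -> T) :
  {in A, forall a, s a \in A} -> {in A, involutive s} -> {in A, forall a, s a != a} ->
  ~~ odd #|A|.
Proof.
move: {2}#|A| (leqnn #|A|) => k; elim: k A => [|k IHk] A card_A sA s_inv s_fix.
  by move: card_A; rewrite leqn0 => /eqP ->.
have [->|[a Aa]] := set_0Vmem A; first by rewrite cards0.
set A' := A :\ a :\ s a.
have sa_in : s a \in A :\ a by rewrite !inE sA // s_fix.
have card_A' : #|A| = #|A'|.+2 by rewrite (cardsD1 a A) Aa (cardsD1 (s a) (A :\ a)) sa_in.
have A'_sub w : w \in A' -> [/\ w \in A, w != a & w != s a].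
  by rewrite !inE => /and3P[-> -> ->].
rewrite card_A' /= negbK; apply: IHk => [|w|w|w].
- by move: card_A; rewrite card_A'; lia.
- case/A'_sub => Aw wa wsa; rewrite !inE sA // andbT.
  apply/andP; split; first by apply: contra wa => /eqP/(congr1 s); rewrite !s_inv // => ->.
  by apply: contra wsa => /eqP <-; rewrite s_inv.
- by case/A'_sub => Aw _ _; apply: s_inv.
- by case/A'_sub => Aw _ _; apply: s_fix.
Qed.

(* Neighbourhoods are given by a list of neighbour functions, which bounds their size. *)
Definition nbhd_step (fs : seq (T -> T)) (X : {set T}) : {set T} :=
  X :|: \bigcup_(f <- fs) f @: X.

Definition ball fs (x : T) k := iter k (nbhd_step fs) [set x].

Lemma card_nbhd_step fs X : #|nbhd_step fs X| <= (size fs).+1 * #|X|.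
Proof.
rewrite /nbhd_step; elim: fs => [|f fs IHfs]; first by rewrite big_nil setU0 mul1n.
rewrite big_cons setUCA; apply: leq_trans (leq_card_setU _ _).1 _.
by rewrite [_.+1 * _]mulSn leq_add ?leq_imset_card.
Qed.

Lemma card_ball fs x k : #|ball fs x k| <= (size fs).+1 ^ k.
Proof.
elim: k => [|k IHk]; first by rewrite cards1.
by apply: leq_trans (card_nbhd_step _ _) _; rewrite expnS leq_mul2l IHk orbT.
Qed.

Lemma ball_sub fs x i j : i <= j -> ball fs x i \subset ball fs x j.
Proof.
move=> /subnK <-; elim: (j - i) => [|k IHk] //.
by apply: subset_trans IHk _; rewrite addSn /ball iterS subsetUl.
Qed.

Lemma mem_nbhd_step fs (X : {set T}) a b :
  a \in X -> has (fun f => f a == b) fs -> b \in nbhd_step fs X.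
Proof.
rewrite /nbhd_step inE => Xa; elim: fs => //= f fs IHfs /orP[/eqP <-|/IHfs].
  by rewrite big_cons inE imset_f ?orbT.
by rewrite big_cons inE orbCA => ->; rewrite orbT.
Qed.

Lemma ball_path (e : rel T) fs x p : (forall a b, e a b -> has (fun f => f a == b) fs) ->
  path e x p -> last x p \in ball fs x (size p).
Proof.
move=> e_fs; elim/last_ind: p => [|p c IHp]; first by rewrite set11.
rewrite rcons_path last_rcons size_rcons => /andP[/IHp p_in /e_fs].
exact: mem_nbhd_step.
Qed.

Lemma dist_geq_ball (e : rel T) fs x u k :
  (forall a b, e a b -> has (fun f => f a == b) fs) ->
  u \notin ball fs x k -> dist_geq e x u k.+1.
Proof.
move=> e_fs u_out p xp pu; rewrite ltnNge; apply/negP => size_p.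
have := ball_path e_fs xp; rewrite pu => /(subsetP (ball_sub fs x size_p)).
by rewrite (negbTE u_out).
Qed.

Lemma girth_geq_cycle_length (e : rel T) g n :
  girth_geq e g -> has_cycle_of_length e n -> g <= n.
Proof. by move=> ge [c [<- size_c uniq_c cycle_c]]; exact: ge cycle_c uniq_c size_c. Qed.

Lemma k_connected3_cubic_nbhs (e : rel T) S f : irreflexive e -> cubic e ->
  is_subgraph e S f -> k_connected 3 S f ->
  {in S, forall x y, e x y -> (y \in S) && f x y}.
Proof.
move=> e_irr e_cubic [_ f_sub] [card_S S_conn] x Sx y xy; apply/negPn/negP => bad.
have f_e a b : f a b -> e a b by move/f_sub/and3P=> [].
set X := [set z in S | f x z].
have X_small : #|X| <= 2.
  have : X \subset [set z | e x z] :\ y.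
    apply/subsetP => z; rewrite !inE => /andP[Sz xz]; rewrite f_e // andbT.
    by apply: contra bad => /eqP <-; rewrite Sz xz.
  move/subset_leq_card; have := cardsD1 y [set z | e x z].
  by rewrite e_cubic inE xy; lia.
have x_out : x \in S :\: X.
  by rewrite !inE Sx andbT; apply: contraFN (e_irr x) => /f_e.
have [z Sz z_out] : exists2 z, z \in S & z \notin x |: X.
  apply/subsetPn/negP => /subset_leq_card; have := cardsU1 x X; lia.
have z_out' : z \in S :\: X by move: z_out; rewrite !inE Sz negb_or andbT => /andP[].
have X_sub : X \subset S by apply/subsetP => w; rewrite inE => /andP[].
case/connectP: (S_conn X X_sub X_small x z x_out z_out') => [[|c p]] /=.
  by move=> _ zx; rewrite zx setU11 in z_out.
by case/andP=> /and3P[_ /setDP[Sc c_out] xc]; rewrite inE Sc xc in c_out.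
Qed.

End FiniteGraphs.

Section CycleGraph.
Variable n : nat.
Implicit Types (a b c : 'I_n).

Definition cycle_graph (a b : 'I_n) := (b == ordS a) || (a == ordS b).
Definition path_graph (a b : 'I_n) := (b == a.+1 :> nat) || (a == b.+1 :> nat).

Lemma ordSE a : ordS a = (if a.+1 == n then 0 else a.+1) :> nat.
Proof.
rewrite /= /ordS /=; case: eqP => [->|a_lt]; first by rewrite modnn.
by apply: modn_small; have := ltn_ord a; lia.
Qed.

Lemma eq_ordS a b : (b == ordS a) = (b == (if a.+1 == n then 0 else a.+1) :> nat).
Proof. by rewrite -ordSE. Qed.

Lemma iter_ordS a i : a + i < n -> iter i (@ordS n) a = a + i :> nat.
Proof.
elim: i => [|i IHi] a_i; first by rewrite addn0.
by rewrite iterS ordSE IHi; [case: eqVneq => //; lia | lia].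
Qed.

Lemma cycle_graph_sym : symmetric cycle_graph.
Proof. by move=> a b; rewrite /cycle_graph orbC. Qed.

Lemma cycle_graph_nbhs a b : cycle_graph a b -> (b == ordS a) || (b == ord_pred a).
Proof. by case/orP => [->//|/eqP ->]; rewrite ordSK eqxx orbT. Qed.

Lemma cycle_graph_closed_setT (S : {set 'I_n}) :
  S != set0 -> {in S, forall a b, cycle_graph a b -> b \in S} -> forall a, a \in S.
Proof.
case/set0Pn => a0 S_a0 S_closed.
have S_pred k : k <= a0 -> forall b, b = a0 - k :> nat -> b \in S.
  elim: k => [|k IHk] k_le b b_val; first by rewrite (_ : b = a0) //; apply: val_inj => /=; lia.
  have k_lt : a0 - k < n by have := ltn_ord a0; lia.
  apply: (S_closed (Ordinal k_lt)); first exact: IHk (ltnW k_le) (Ordinal k_lt) erefl.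
  rewrite /cycle_graph !eq_ordS /=; apply/orP; right.
  by case: ifP => /eqP ?; apply/eqP; lia.
have S_succ k : k < n -> forall b, b = k :> nat -> b \in S.
  elim: k => [|k IHk] k_lt b b_val; first by apply: (S_pred a0) => //; lia.
  have k_lt' : k < n by lia.
  apply: (S_closed (Ordinal k_lt')); first exact: IHk k_lt' (Ordinal k_lt') erefl.
  rewrite /cycle_graph !eq_ordS /=; apply/orP; left.
  by case: ifP => /eqP ?; apply/eqP; lia.
by move=> a; apply: (S_succ a).
Qed.

Lemma path_graph_sym : symmetric path_graph.
Proof. by move=> a b; rewrite /path_graph orbC. Qed.

(* Adding the edges of the path one by one, each new edge reaches an isolated vertex. *)
Definition path_graph_upto k (a b : 'I_n) := path_graph a b && (maxn a b <= k).

Lemma girth_geq_path_graph_upto g k : girth_geq (path_graph_upto k) g.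
Proof.
elim: k => [|k IHk].
  case=> [//|u [//|w p]] /= /andP[uw _]; move: uw; rewrite /path_graph_upto /path_graph /=; lia.
have [k_lt|k_ge] := ltnP k.+1 n; last first.
  apply: girth_geq_sub IHk => a b /andP[ab _]; rewrite /path_graph_upto ab /=.
  by have := ltn_ord a; have := ltn_ord b; lia.
pose a : 'I_n := Ordinal (ltnW k_lt); pose b : 'I_n := Ordinal k_lt.
have upto_sym : symmetric (path_graph_upto k).
  by move=> x y; rewrite /path_graph_upto /path_graph /= orbC maxnC.
apply: (@girth_geq_sub _ (add_edge (path_graph_upto k) a b)).
  move=> x y /andP[xy xy_le]; rewrite /add_edge /edge2 /path_graph_upto /=.
  have [_|x_gt] := leqP (maxn x y) k; first by rewrite xy.
  rewrite andbF /= -!val_eqE /=; move: xy xy_le x_gt; rewrite /path_graph /=; lia.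
apply: girth_geq_add_edge upto_sym IHk _.
apply: dist_geq_unreachable => [|c]; first by rewrite -val_eqE /=; lia.
by rewrite /path_graph_upto /path_graph /=; lia.
Qed.

Lemma girth_geq_path_graph g : girth_geq path_graph g.
Proof.
apply: girth_geq_sub (@girth_geq_path_graph_upto g n) => a b ab.
by rewrite /path_graph_upto ab /=; have := ltn_ord a; have := ltn_ord b; lia.
Qed.

Lemma dist_geq_cycle_graph a b : a = 0 :> nat -> dist_geq cycle_graph a b (minn b (n - b)).
Proof.
move=> a0; have := @dist_geq_potential _ cycle_graph (fun v : 'I_n => minn v (n - v)) a b.
rewrite /= a0 min0n subn0; apply => c d; rewrite /cycle_graph !eq_ordS /=.
by have := ltn_ord c; have := ltn_ord d; case: ifP => /eqP ?; case: ifP => /eqP ?; lia.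
Qed.

Hypothesis n_gt2 : 2 < n.

Lemma ordS_neq a : ordS a != a.
Proof.
apply/eqP => /(congr1 (@nat_of_ord n)); rewrite ordSE; have := ltn_ord a.
by case: ifP => /eqP; lia.
Qed.

Lemma ordS_pred_neq a : ordS a != ord_pred a.
Proof.
apply/eqP => /(congr1 (@ordS n)); rewrite ord_predK => /(congr1 (@nat_of_ord n)).
rewrite ordSE; have := ordSE a; have := ltn_ord a.
by case: ifP => /eqP ? ? ->; case: ifP => /eqP; lia.
Qed.

Lemma cycle_graph_irr : irreflexive cycle_graph.
Proof. by move=> a; rewrite /cycle_graph eq_sym (negbTE (ordS_neq a)). Qed.

Lemma girth_geq_cycle_graph g : g <= n -> girth_geq cycle_graph g.
Proof.
move=> g_le; have n_gt0 : 0 < n by lia.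
have n1_lt : n.-1 < n by lia.
pose lo : 'I_n := Ordinal n_gt0; pose hi : 'I_n := Ordinal n1_lt.
apply: (@girth_geq_sub _ (add_edge path_graph hi lo)).
  move=> a b; rewrite /cycle_graph /add_edge /edge2 /path_graph /= !eq_ordS -!val_eqE /=.
  have := ltn_ord a; have := ltn_ord b; case: ifP => /eqP ?; case: ifP => /eqP ?; lia.
apply: girth_geq_add_edge path_graph_sym (girth_geq_path_graph g) _.
apply: dist_geq_leq (@dist_geq_potential _ _ (fun v : 'I_n => n.-1 - v) hi lo _).
  by rewrite /=; lia.
by move=> c d; rewrite /path_graph /=; lia.
Qed.

End CycleGraph.

Section Construction.
Variables m g : nat.
Hypotheses (g_gt2 : 2 < g) (m_even : ~~ odd m) (m_large : 2 * 4 ^ g.-1 + 2 < m).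

Local Notation n := (m + m).
Implicit Types (s : 'I_n -> 'I_n) (a b u v w x y z : 'I_n).

Lemma g_gt0 : 0 < g. Proof. by apply: leq_trans g_gt2. Qed.

Lemma g_lt_m : g < m.
Proof. by have := ltn_expl g.-1 (isT : 1 < 4); lia. Qed.

Lemma n_gt2 : 2 < n. Proof. by have := g_lt_m; lia. Qed.
Lemma n_gt0 : 0 < n. Proof. by have := n_gt2; lia. Qed.
Lemma g1_lt_n : g.-1 < n. Proof. by have := g_lt_m; lia. Qed.

Definition chord_lo : 'I_n := Ordinal n_gt0.
Definition chord_hi : 'I_n := Ordinal g1_lt_n.

Lemma chord_lo_neq_hi : chord_lo != chord_hi.
Proof. by rewrite -val_eqE /=; lia. Qed.

Lemma chord_not_cycle_edge : ~~ cycle_graph chord_lo chord_hi.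
Proof.
by rewrite /cycle_graph !eq_ordS /=; have := g_lt_m; case: ifP => /eqP ?; case: ifP => /eqP ?; lia.
Qed.

Definition matching_graph s a b := cycle_graph a b || (s a == b) && (a != b).

Definition same_half a b := (a < m) == (b < m).

Definition fixed s := [set w | s w == w].

(* The chord {0, g-1} closes the g-cycle 0, 1, ..., g-1; keeping matching edges inside
   the halves makes {m-1, 2m-1} a vertex cut. *)
Definition admissible s :=
  [/\ involutive s, forall w, ~~ cycle_graph w (s w), forall w, same_half w (s w),
      s chord_lo = chord_hi & girth_geq (matching_graph s) g].

Lemma same_half_sym : symmetric same_half.
Proof. by move=> a b; rewrite /same_half eq_sym. Qed.

Lemma same_half_trans b a c : same_half a b -> same_half b c -> same_half a c.
Proof. by rewrite /same_half => /eqP -> /eqP ->. Qed.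

Lemma not_cycle_edge_sym : symmetric (fun a b => ~~ cycle_graph a b).
Proof. by move=> a b; rewrite cycle_graph_sym. Qed.

Lemma matching_graph_sym s : involutive s -> symmetric (matching_graph s).
Proof.
move=> s_inv a b; rewrite /matching_graph cycle_graph_sym; congr (_ || _).
by apply/idP/idP => /andP[/eqP <- ab]; rewrite s_inv eqxx eq_sym.
Qed.

Lemma matching_graph_irr s : irreflexive (matching_graph s).
Proof. by move=> a; rewrite /matching_graph (cycle_graph_irr n_gt2) eqxx andbF. Qed.

Lemma cycle_graph_sub s : subrel (@cycle_graph n) (matching_graph s).
Proof. by move=> a b ab; rewrite /matching_graph ab. Qed.

Lemma dist_geq_not_cycle_edge s a b : dist_geq (matching_graph s) a b g.-1 -> ~~ cycle_graph a b.
Proof. by move=> dab; apply: contra (dist_geq_nonadj _ dab) => [/cycle_graph_sub //|]; lia. Qed.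

Lemma matching_graph_nbhs s a b :
  matching_graph s a b -> has (fun f => f a == b) [:: @ordS n; @ord_pred n; s].
Proof.
case/orP => [/cycle_graph_nbhs|/andP[sab _]]; last by rewrite /= sab !orbT.
by case/orP => /eqP ->; rewrite /= eqxx ?orbT.
Qed.

Lemma matching_graph_pair_up s a b :
  subrel (matching_graph (pair_up s a b)) (add_edge (matching_graph s) a b).
Proof.
move=> c d; rewrite /add_edge /matching_graph /edge2 /pair_up /=.
case: (cycle_graph c d) => //=.
have [->|ca] := eqVneq c a; first by move=> /andP[/eqP -> _]; rewrite !eqxx orbT.
have [->|cb] := eqVneq c b; first by move=> /andP[/eqP -> _]; rewrite !eqxx !orbT.
by move=> ->.
Qed.

Lemma matching_graph_unpair s u : ~~ cycle_graph u (s u) ->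
  subrel (matching_graph (unpair s u (s u))) (del_edge (matching_graph s) u (s u)).
Proof.
move=> not_cyc c d; rewrite /del_edge /matching_graph /edge2 /unpair /=.
case cd: (cycle_graph c d) => /=.
  move=> _; apply/negP => /orP[] /andP[/eqP ? /eqP ?]; subst c d.
    by rewrite cd in not_cyc.
  by rewrite cycle_graph_sym cd in not_cyc.
have [->|cu] := eqVneq c u; first by move=> /andP[/eqP ->]; rewrite eqxx.
have [->|cv] := eqVneq c (s u); first by move=> /andP[/eqP ->]; rewrite eqxx.
by move=> /andP[/eqP <- cd']; rewrite eqxx cd' /=.
Qed.

Lemma admissible_initial : admissible (pair_up id chord_lo chord_hi).
Proof.
have lo_hi := chord_lo_neq_hi; split.
- exact: pair_up_involutive.
- apply: pair_up_rel not_cycle_edge_sym chord_not_cycle_edge _ => w.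
  by rewrite (cycle_graph_irr n_gt2).
- apply: pair_up_rel same_half_sym _ _ => [|w]; last exact: eqxx.
  by rewrite /same_half /=; have := g_lt_m; case: ltnP; case: ltnP; lia.
- by rewrite /pair_up eqxx.
have cycle_id : subrel (matching_graph id) (@cycle_graph n).
  by move=> a b /orP[//|/andP[/eqP -> ]]; rewrite eqxx.
have dist_chord : dist_geq (matching_graph id) chord_lo chord_hi g.-1.
  apply: dist_geq_sub cycle_id _.
  apply: dist_geq_leq (@dist_geq_cycle_graph n chord_lo chord_hi erefl).
  by rewrite /=; have := g_lt_m; lia.
apply: girth_geq_sub (@matching_graph_pair_up id chord_lo chord_hi) _.
apply: girth_geq_add_edge (matching_graph_sym (s := id) (fun _ => erefl)) _ dist_chord.
exact: girth_geq_sub cycle_id (girth_geq_cycle_graph n_gt2 (ltnW (ltn_addr _ g_lt_m))).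
Qed.

Lemma card_same_half x : #|[set w | same_half x w]| = m.
Proof.
have card_low : #|[set w : 'I_n | w < m]| = m.
  suff -> : [set w : 'I_n | w < m] = [set lshift m i | i : 'I_m].
    by rewrite card_imset ?card_ord //; exact: lshift_inj.
  apply/setP => w; rewrite inE; apply/idP/imsetP => [w_lt|[i _ ->]]; last by rewrite /= ltn_ord.
  by exists (Ordinal w_lt) => //; apply: val_inj.
have [x_low|x_high] := boolP (x < m).
  rewrite -[RHS]card_low; apply: eq_card => w.
  by rewrite !inE /same_half x_low eq_sym eqb_id.
have -> : [set w | same_half x w] = ~: [set w : 'I_n | w < m].
  by apply/setP => w; rewrite !inE /same_half (negbTE x_high) eq_sym eqbF_neg.
by have := cardsC [set w : 'I_n | w < m]; rewrite card_ord card_low; lia.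
Qed.

Lemma matching_graph_switch s x y u : ~~ cycle_graph u (s u) ->
  subrel (matching_graph (switch s x y u))
         (add_edge (add_edge (del_edge (matching_graph s) u (s u)) x u) y (s u)).
Proof.
move=> not_cyc a b /matching_graph_pair_up; apply: add_edgeS => c d /matching_graph_pair_up.
exact/add_edgeS/matching_graph_unpair.
Qed.

Lemma fixed_not_chord s w : involutive s -> s chord_lo = chord_hi -> s w = w ->
  (chord_lo != w) && (chord_hi != w).
Proof.
move=> s_inv s_lo sw; have hi_lo : s chord_hi = chord_lo by rewrite -s_lo s_inv.
apply/andP; split; apply: contra_neq chord_lo_neq_hi => chord_w.
  by rewrite -s_lo chord_w sw.
by rewrite -hi_lo chord_w sw.
Qed.

Lemma exists_fixed_partner s x : involutive s -> (forall w, same_half w (s w)) -> s x = x ->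
  exists y, [/\ s y = y, same_half x y & y != x].
Proof.
move=> s_inv s_half sx; set H := [set w | same_half x w].
(* s pairs up the moved vertices of the half, which has an even number m of vertices. *)
have even_moved : ~~ odd #|H :\: fixed s|.
  apply: even_card_involution => w; rewrite !inE => /andP[sw xw] //.
  by rewrite (same_half_trans xw (s_half w)) s_inv eq_sym sw.
have [y]: exists y, y \in (H :&: fixed s) :\ x.
  apply/set0Pn; rewrite -card_gt0; apply: contraNT m_even; rewrite -leqNgt leqn0 => /eqP card0.
  have := cardsID (fixed s) H; rewrite card_same_half (cardsD1 x (H :&: fixed s)) card0.
  by rewrite !inE sx /same_half !eqxx => <-.
by rewrite !inE => /and3P[yx xy /eqP sy]; exists y.
Qed.

Local Notation nbhd_fns s := [:: @ordS n; @ord_pred n; s].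

Lemma exists_far_vertex s x y : exists u, [/\ same_half x u,
  u \notin ball (nbhd_fns s) x g.-1, u \notin ball (nbhd_fns s) y g.-1,
  chord_lo != u & chord_hi != u].
Proof.
set X := ball (nbhd_fns s) x g.-1 :|: ball (nbhd_fns s) y g.-1 :|: [set chord_lo; chord_hi].
have : ~~ ([set w | same_half x w] \subset X).
  apply/negP => /subset_leq_card; rewrite card_same_half; apply/negP; rewrite -ltnNge.
  have card_chords : #|[set chord_lo; chord_hi]| <= 2 by rewrite cards2; case: (_ != _).
  apply: leq_ltn_trans (leq_card_setU _ _).1 _.
  apply: leq_ltn_trans (leq_add (leq_card_setU _ _).1 card_chords) _.
  apply: leq_ltn_trans (leq_add (leq_add (card_ball _ _ _) (card_ball _ _ _)) (leqnn 2)) _.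
  by rewrite /= addnn -mul2n.
case/subsetPn => u xu; rewrite !inE !negb_or in xu * => /andP[/andP[ux uy] /andP[lo_u hi_u]].
by exists u; split; rewrite // eq_sym.
Qed.

Lemma admissible_pair_up s x z : admissible s -> s x = x -> s z = z -> same_half x z ->
  dist_geq (matching_graph s) x z g.-1 ->
  admissible (pair_up s x z) /\ fixed (pair_up s x z) \proper fixed s.
Proof.
case=> s_inv s_cyc s_half s_lo s_girth sx sz half_xz dxz.
have [lo_x _] := andP (fixed_not_chord s_inv s_lo sx).
have [lo_z _] := andP (fixed_not_chord s_inv s_lo sz).
have zx : z != x by rewrite eq_sym; apply: dist_geq_neq dxz; lia.
split; first split.
- exact: pair_up_involutive.
- exact: pair_up_rel not_cycle_edge_sym (dist_geq_not_cycle_edge dxz) s_cyc.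
- exact: pair_up_rel same_half_sym half_xz s_half.
- by rewrite /pair_up (negbTE lo_x) (negbTE lo_z).
- apply: girth_geq_sub (@matching_graph_pair_up s x z) _.
  exact: girth_geq_add_edge (matching_graph_sym s_inv) s_girth dxz.
apply/properP; split; last by exists x; rewrite !inE ?sx ?eqxx // /pair_up eqxx.
apply/subsetP => w; rewrite !inE /pair_up.
by have [->|_] := eqVneq w x; [rewrite sx|have [->|_] := eqVneq w z; rewrite ?sz].
Qed.

Lemma admissible_switch s x y u : admissible s -> s x = x -> s y = y -> y != x ->
  same_half x y -> same_half x u -> s u != u -> chord_lo != u -> chord_hi != u ->
  dist_geq (matching_graph s) x u g -> dist_geq (matching_graph s) y u g ->
  admissible (switch s x y u) /\ fixed (switch s x y u) \proper fixed s.
Proof.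
case=> s_inv s_cyc s_half s_lo s_girth sx sy yx half_xy half_xu su lo_u hi_u dxu dyu.
have e_sym := matching_graph_sym s_inv.
have vu : matching_graph s (s u) u by rewrite /matching_graph s_inv eqxx su orbT.
rewrite -(prednK g_gt0) in dxu dyu.
have [dxv dyv] := (dist_geq_adj vu dxu, dist_geq_adj vu dyu).
have dxu_g1 := dist_geq_leq (leqnSn _) dxu.
have xu : x != u by apply: dist_geq_neq dxu.
have yu : y != u by apply: dist_geq_neq dyu.
have xv : x != s u by apply: dist_geq_neq dxv; lia.
have yv : y != s u by apply: dist_geq_neq dyv; lia.
have [lo_x _] := andP (fixed_not_chord s_inv s_lo sx).
have [lo_y _] := andP (fixed_not_chord s_inv s_lo sy).
have lo_v : chord_lo != s u by apply: contraNneq hi_u => lo_v; rewrite -s_lo lo_v s_inv.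
split; first split.
- exact: switch_involutive.
- exact: switch_rel not_cycle_edge_sym (dist_geq_not_cycle_edge dxu_g1)
    (dist_geq_not_cycle_edge dyv) s_cyc.
- apply: (switch_rel same_half_sym half_xu _ s_half).
  apply: same_half_trans (s_half u); apply: same_half_trans half_xu.
  by rewrite same_half_sym.
- by rewrite switchE !(negbTE lo_y, negbTE lo_v, negbTE lo_x, negbTE lo_u).
- apply: girth_geq_sub (@matching_graph_switch s x y u (s_cyc u)) _.
  have uv : matching_graph s u (s u) by rewrite e_sym.
  exact: girth_geq_switch e_sym (@matching_graph_irr s) s_girth uv dxu_g1 dyv dxv.
apply/properP; split.
  apply/subsetP => w; rewrite !inE switchE.
  have [->|wy] := eqVneq w y; first by rewrite sy.
  have [->|wv] := eqVneq w (s u); first by rewrite (negbTE yv).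
  have [->|wx] := eqVneq w x; first by rewrite sx.
  by have [->|//] := eqVneq w u; rewrite (negbTE xu).
exists x; rewrite !inE ?sx ?eqxx // switchE (eq_sym x y) (negbTE yx) (negbTE xv) eqxx.
by rewrite eq_sym.
Qed.

Lemma admissible_step s x : admissible s -> s x = x ->
  exists2 s', admissible s' & fixed s' \proper fixed s.
Proof.
move=> s_adm sx; have [s_inv _ s_half _ _] := s_adm.
have [y [sy half_xy yx]] := exists_fixed_partner s_inv s_half sx.
have [u [half_xu ux uy lo_u hi_u]] := exists_far_vertex s x y.
have [dxu dyu] := (dist_geq_ball (@matching_graph_nbhs s) ux,
                   dist_geq_ball (@matching_graph_nbhs s) uy).
rewrite (prednK g_gt0) in dxu dyu.
have [su|su] := eqVneq (s u) u.
  have [] := admissible_pair_up s_adm sx su half_xu (dist_geq_leq (leq_pred g) dxu).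
  by exists (pair_up s x u).
have [] := admissible_switch s_adm sx sy yx half_xy half_xu su lo_u hi_u dxu dyu.
by exists (switch s x y u).
Qed.

Lemma exists_admissible_fixfree : exists2 s, admissible s & forall w, s w != w.
Proof.
suff ex_k k s : admissible s -> #|fixed s| <= k -> exists2 s, admissible s & forall w, s w != w.
  exact: ex_k admissible_initial (leqnn _).
elim: k s => [|k IHk] s s_adm card_fix; have [w /eqP sw|fixfree] := pickP (fun w => s w == w).
- by move: card_fix; rewrite leqn0 => /eqP/cards0_eq/setP/(_ w); rewrite !inE sw eqxx.
- by exists s => // w; rewrite fixfree.
- have [s' s'_adm s'_fix] := admissible_step s_adm sw.
  by apply: IHk s'_adm _; have := proper_card s'_fix; lia.
- by exists s => // w; rewrite fixfree.
Qed.

Lemma girth_matching_graph s : admissible s -> girth_eq (matching_graph s) g.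
Proof.
case=> s_inv _ _ s_lo s_girth; split; last first.
  by move=> k k_lt /(girth_geq_cycle_length s_girth); rewrite leqNgt k_lt.
have g_lt_n : g < n by have := g_lt_m; lia.
have val_traject : map (@nat_of_ord n) (traject (@ordS n) chord_lo g) = iota 0 g.
  apply: (@eq_from_nth _ 0); rewrite size_map size_traject ?size_iota // => i i_lt.
  rewrite (nth_map chord_lo) ?size_traject // nth_traject // nth_iota // iter_ordS //=.
  by lia.
exists (traject (@ordS n) chord_lo g); split => //; first exact: size_traject.
  by rewrite -(map_inj_uniq (@ord_inj n)) val_traject iota_uniq.
rewrite -(prednK g_gt0) /= rcons_path last_traject.
apply/andP; split.
  apply: sub_path (fpath_traject _ _ _) => a b /eqP <-.
  by rewrite /matching_graph /cycle_graph eqxx.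
have -> : iter g.-1 (@ordS n) chord_lo = chord_hi.
  by apply: val_inj; rewrite /= iter_ordS //=; lia.
have hi_lo : s chord_hi = chord_lo by rewrite -s_lo s_inv.
by rewrite /matching_graph hi_lo eqxx eq_sym chord_lo_neq_hi orbT.
Qed.

Lemma m1_lt_n : m.-1 < n. Proof. by have := g_lt_m; lia. Qed.
Lemma n1_lt_n : n.-1 < n. Proof. by have := g_lt_m; lia. Qed.
Lemma m_lt_n : m < n. Proof. by have := g_lt_m; lia. Qed.

Definition cut_lo : 'I_n := Ordinal m1_lt_n.
Definition cut_hi : 'I_n := Ordinal n1_lt_n.
Definition mid : 'I_n := Ordinal m_lt_n.

Lemma matching_graph_same_half s a b : (forall w, same_half w (s w)) ->
  matching_graph s a b -> a \notin [set cut_lo; cut_hi] -> b \notin [set cut_lo; cut_hi] ->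
  same_half a b.
Proof.
move=> s_half /orP[ab|/andP[/eqP <- _ _ _]]; last exact: s_half.
rewrite !inE -!(inj_eq (@ord_inj n)) /= !negb_or => /andP[/eqP ? /eqP ?] /andP[/eqP ? /eqP ?].
move: ab; rewrite /cycle_graph !eq_ordS /same_half /=; have := ltn_ord a; have := ltn_ord b.
by case: ifP => /eqP ?; case: ifP => /eqP ? ? ? ?; apply/eqP; lia.
Qed.

Section FixedPointFree.
Variable s : 'I_n -> 'I_n.
Hypotheses (s_adm : admissible s) (s_fixfree : forall w, s w != w).

Lemma matching_graph_nbhsE a : [set b | matching_graph s a b] = [set ordS a; ord_pred a; s a].
Proof.
apply/setP => b; rewrite !inE /matching_graph; apply/idP/idP.
  case/orP => [/cycle_graph_nbhs|/andP[/eqP -> _]]; last by rewrite eqxx orbT.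
  by case/orP => ->; rewrite ?orbT.
case/orP => [/orP[]|] /eqP ->; first by rewrite /cycle_graph eqxx.
  by rewrite /cycle_graph ord_predK eqxx orbT.
by rewrite eqxx eq_sym s_fixfree orbT.
Qed.

Lemma cubic_matching_graph : cubic (matching_graph s).
Proof.
have [_ s_cyc _ _ _] := s_adm; move=> a; rewrite matching_graph_nbhsE.
have [succ_s pred_s] : ordS a != s a /\ ord_pred a != s a.
  split; apply: contraNneq (s_cyc a) => <-; rewrite /cycle_graph ?eqxx //.
  by rewrite ord_predK eqxx orbT.
by rewrite -setUA cardsU1 cards2 !inE negb_or (ordS_pred_neq n_gt2) succ_s pred_s.
Qed.

Lemma fragile_matching_graph : fragile (matching_graph s).
Proof.
have [_ _ s_half _ _] := s_adm; move=> S f f_sub S_3conn.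
have e_nbhs := k_connected3_cubic_nbhs (@matching_graph_irr s) cubic_matching_graph f_sub S_3conn.
have [[_ f_edges] [card_S S_conn]] := (f_sub, S_3conn).
have S_all : forall a, a \in S.
  apply: cycle_graph_closed_setT => [|a Sa b ab].
    by rewrite -card_gt0; apply: leq_trans card_S.
  by have /andP[] := e_nbhs a Sa b (@cycle_graph_sub s _ _ ab).
set X := [set cut_lo; cut_hi].
have X_sub : X \subset S by apply/subsetP => a _; apply: S_all.
have X_small : #|X| <= 2 by rewrite cards2; case: (_ != _).
have lo_in : chord_lo \in S :\: X by rewrite !inE S_all -!val_eqE /=; lia.
have mid_in : mid \in S :\: X by rewrite !inE S_all -!val_eqE /=; lia.
have halves_closed : closed (restr (S :\: X) f) [pred w : 'I_n | w < m].
  move=> a b /and3P[/setDP[_ a_out] /setDP[_ b_out] /f_edges/and3P[_ _ ab]].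
  exact: (eqP (matching_graph_same_half s_half ab a_out b_out)).
have := closed_connect halves_closed (S_conn X X_sub X_small _ _ lo_in mid_in).
by rewrite !inE /= ltnn; have := g_lt_m; case: m.
Qed.

Lemma not_two_degenerate_matching_graph : ~ two_degenerate (matching_graph s).
Proof.
have [s_inv _ _ _ _] := s_adm; move=> two_deg.
have full : is_subgraph (matching_graph s) [set: 'I_n] (matching_graph s).
  by split=> [|a b ab]; [exact: matching_graph_sym | rewrite !inE ab].
have [|a _] := two_deg _ _ full; first by apply/set0Pn; exists chord_lo.
rewrite /deg_in (eq_card (B := [set b | matching_graph s a b])) ?cubic_matching_graph //.
by move=> b; rewrite !inE.
Qed.

End FixedPointFree.

End Construction.

Theorem mainTheorem8 :
  forall g : nat, 3 <= g ->
    exists (n : nat) (e : rel 'I_n),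
      [/\ simple_graph e, fragile e, cubic e, girth_eq e g
        & ~ two_degenerate e].
Proof.
move=> g g_gt2.
have m_even : ~~ odd (4 ^ g) by rewrite oddX; case: g g_gt2.
have m_large : 2 * 4 ^ g.-1 + 2 < 4 ^ g.
  rewrite -[in X in _ < X](prednK (ltnW (ltnW g_gt2))) expnS.
  by have := ltn_expl g.-1 (isT : 1 < 4); lia.
have [s s_adm s_fixfree] := exists_admissible_fixfree g_gt2 m_even m_large.
have [s_inv _ _ _ _] := s_adm.
exists (4 ^ g + 4 ^ g), (matching_graph s); split.
- by split; [exact: matching_graph_sym | exact: (matching_graph_irr g_gt2 m_even m_large)].
- exact: fragile_matching_graph s_adm s_fixfree.
- exact: cubic_matching_graph s_adm s_fixfree.
- exact: girth_matching_graph s_adm.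
- exact: not_two_degenerate_matching_graph s_adm s_fixfree.
Qed.
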